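(* Let $(\bar p,\bar x)$ be a competitive equilibrium of $\mathcal E^{N,\beta}$ with $\bar p\in\mathbb R^N_{++}$ and all $\bar x_{in}>0$, where each $u_{in}$ is twice differentiable with $u_{in}'>0$, $u_{in}''<0$ on $\mathbb R_{++}$. For every $u\in\mathbb R^N$, writing $v_n=u_n/\bar p_n$ ($n=1,\dots,N$), $$S(u):=\sum_{i\in I_N}\sum_{n=1}^N\frac{\bar r_{in}}{\bar p_n}\bigl(u_n-\bar p_n\Lambda_i(u)\bigr)^2=\frac12\sum_{m,n=1}^Nw_{mn}(v_m-v_n)^2,$$ where $w_{mn}=\sum_{i\in I_N}\bar r_i^0\bar m_{im}\bar m_{in}=\sum_{i\in I_N}\frac{(\bar p_m\bar r_{im})(\bar p_n\bar r_{in})}{\bar r_i^0}$.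
   Context: For $N\ge1$, $\beta\in(0,1)$, the economy $\mathcal E^{N,\beta}$ has finite agent set $I_N$, commodities $0,\dots,N$, utilities $U_i(x_i)=\sum_{n=0}^N\beta^nu_{in}(x_{in})$, endowments in $\mathbb R_+^{N+1}$; price of commodity 0 is 1 and $p=(p_1,\dots,p_N)$; each agent maximizes $U_i$ subject to the budget constraint valued at $p$; an equilibrium $(\bar p,\bar x)$ has each $\bar x_i$ optimal at $\bar p$ and markets clearing. Equilibrium quantities: $\bar r_{in}=u_{in}'(\bar x_{in})/(-u_{in}''(\bar x_{in}))$, $\bar r_i^0=\sum_{n=1}^N\bar p_n\bar r_{in}$, $\bar m_{in}=\bar p_n\bar r_{in}/\bar r_i^0$, $\Lambda_i(q)=\sum_{n=1}^N\bar r_{in}q_n/\bar r_i^0$. *)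

From HB Require Import structures.
From mathcomp Require Import all_boot all_order all_algebra.
From mathcomp Require Import all_classical all_reals all_analysis.
Set Implicit Arguments. Unset Strict Implicit. Unset Printing Implicit Defensive.
Import Order.TTheory GRing.Theory Num.Theory.
Local Open Scope ring_scope.

Section Economy.
Variables (R : realType) (I : finType) (N : nat).

(* Commodities are 'I_N.+1 (0..N); commodity j+1 (j : 'I_N) is [lift ord0 j].
   Prices p : 'I_N -> R are the prices p_1..p_N; commodity 0 has price 1. *)
Definition price (p : 'I_N -> R) (k : 'I_N.+1) : R :=
  match unlift ord0 k with None => 1 | Some j => p j end.

Definition Util (beta : R) (u : I -> 'I_N.+1 -> R -> R) (i : I)
  (y : 'I_N.+1 -> R) : R := \sum_(k < N.+1) beta ^+ k * u i k (y k).

Definition consumption (y : 'I_N.+1 -> R) : Prop := forall k, 0 <= y k.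

Definition in_budget (p : 'I_N -> R) (e : I -> 'I_N.+1 -> R) (i : I)
  (y : 'I_N.+1 -> R) : Prop :=
  \sum_(k < N.+1) price p k * y k <= \sum_(k < N.+1) price p k * e i k.

Definition equilibrium (beta : R) (u : I -> 'I_N.+1 -> R -> R)
  (e : I -> 'I_N.+1 -> R) (p : 'I_N -> R) (x : I -> 'I_N.+1 -> R) : Prop :=
  (forall i, consumption (x i) /\ in_budget p e i (x i) /\
     forall y, consumption y -> in_budget p e i y ->
       Util beta u i y <= Util beta u i (x i)) /\
  (forall k, \sum_(i : I) x i k = \sum_(i : I) e i k).

(* Equilibrium quantities; index j : 'I_N stands for commodity n = j+1. *)
Definition rbar (u : I -> 'I_N.+1 -> R -> R) (x : I -> 'I_N.+1 -> R)
  (i : I) (j : 'I_N) : R :=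
  derive1 (u i (lift ord0 j)) (x i (lift ord0 j)) /
    (- derive1 (derive1 (u i (lift ord0 j))) (x i (lift ord0 j))).

Definition rbar0 u x (p : 'I_N -> R) (i : I) : R :=
  \sum_(j < N) p j * rbar u x i j.

Definition mbar u x (p : 'I_N -> R) (i : I) (j : 'I_N) : R :=
  p j * rbar u x i j / rbar0 u x p i.

Definition Lambda u x (p : 'I_N -> R) (i : I) (q : 'I_N -> R) : R :=
  \sum_(j < N) rbar u x i j * q j / rbar0 u x p i.

Definition Sform u x (p : 'I_N -> R) (q : 'I_N -> R) : R :=
  \sum_(i : I) \sum_(j < N)
     rbar u x i j / p j * (q j - p j * Lambda u x p i q) ^+ 2.

Definition wmat u x (p : 'I_N -> R) (m n : 'I_N) : R :=
  \sum_(i : I) rbar0 u x p i * mbar u x p i m * mbar u x p i n.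

End Economy.

From HB Require Import structures.
From mathcomp Require Import all_boot all_order all_algebra.
From mathcomp Require Import all_classical all_reals all_analysis.
From mathcomp Require Import ring.
Import Order.TTheory GRing.Theory Num.Theory.
Local Open Scope ring_scope.

(* Agent by agent, with weights a_n = p_n r_in and v_n = q_n / p_n, the summand
   of S is a_n (v_n - Lambda_i(q))^2 and Lambda_i(q) is the a-weighted mean of v.
   So S is a sum of weighted variances, and a weighted variance is half the
   weighted mean of the squared pairwise differences (v_m - v_n)^2. *)

Section WeightedVariance.
Variables (R : numFieldType) (T : finType) (a v : T -> R).

Let A := \sum_k a k.
Let S1 := \sum_k a k * v k.
Let S2 := \sum_k a k * v k ^+ 2.

Lemma sum_pairwise_sqr_diff :
  \sum_m \sum_n a m * a n * (v m - v n) ^+ 2 = 2 * (A * S2 - S1 ^+ 2).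
Proof.
have expand m n : a m * a n * (v m - v n) ^+ 2 =
    a m * v m ^+ 2 * a n + a m * (a n * v n ^+ 2) - 2 * (a m * v m) * (a n * v n).
  by ring.
under eq_bigr => m _ do
  rewrite (eq_bigr _ (fun n _ => expand m n)) !big_split /= sumrN -!mulr_sumr.
rewrite !big_split /= sumrN -!mulr_suml -mulr_sumr -/A -/S1 -/S2.
by ring.
Qed.

Lemma weighted_variance_pairwise : A != 0 ->
  \sum_j a j * (v j - S1 / A) ^+ 2 =
  2^-1 * \sum_m \sum_n a m * a n / A * (v m - v n) ^+ 2.
Proof.
move=> A_neq0.
have expand j : a j * (v j - S1 / A) ^+ 2 =
    a j * v j ^+ 2 - 2 * (S1 / A) * (a j * v j) + (S1 / A) ^+ 2 * a j.
  by ring.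
rewrite (eq_bigr _ (fun j _ => expand j)) !big_split /= sumrN -!mulr_sumr -/A -/S1 -/S2.
have -> : \sum_m \sum_n a m * a n / A * (v m - v n) ^+ 2 =
    A^-1 * \sum_m \sum_n a m * a n * (v m - v n) ^+ 2.
  rewrite mulr_sumr; apply: eq_bigr => m _.
  by rewrite mulr_sumr; apply: eq_bigr => n _; ring.
rewrite sum_pairwise_sqr_diff.
by field.
Qed.

End WeightedVariance.

Lemma sum_sqr_dev_rescale (R : fieldType) (T : finType) (r p q : T -> R) :
  (forall j, p j != 0) -> \sum_j p j * r j != 0 ->
  let a j := p j * r j in let v j := q j / p j in
  \sum_j r j / p j * (q j - p j * (\sum_k r k * q k / \sum_k p k * r k)) ^+ 2 =
  \sum_j a j * (v j - (\sum_k a k * v k) / \sum_k a k) ^+ 2.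
Proof.
move=> p_neq0 A_neq0 a v.
have -> : \sum_k r k * q k / \sum_k p k * r k = (\sum_k a k * v k) / \sum_k a k.
  rewrite !mulr_suml; apply: eq_bigr => k _.
  by rewrite /a /v; field; rewrite A_neq0 p_neq0.
apply: eq_bigr => j _.
by rewrite /a /v; field; rewrite A_neq0 p_neq0.
Qed.

Section Equilibrium.
Variables (R : realType) (I : finType) (N : nat).
Variables (u : I -> 'I_N.+1 -> R -> R) (p : 'I_N -> R) (x : I -> 'I_N.+1 -> R).
Hypothesis N_gt0 : (0 < N)%N.
Hypothesis du_gt0_d2u_lt0 : forall i k (t : R), 0 < t ->
  0 < derive1 (u i k) t /\ derive1 (derive1 (u i k)) t < 0.
Hypothesis p_gt0 : forall j, 0 < p j.
Hypothesis x_gt0 : forall i k, 0 < x i k.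

Lemma rbar_gt0 i j : 0 < rbar u x i j.
Proof.
have [du_gt0 d2u_lt0] := du_gt0_d2u_lt0 i (lift ord0 j) _ (x_gt0 i (lift ord0 j)).
by rewrite /rbar divr_gt0 // oppr_gt0.
Qed.

Lemma rbar0_gt0 i : 0 < rbar0 u x p i.
Proof.
rewrite /rbar0 (bigD1 (Ordinal N_gt0)) //= ltr_pwDl //.
  exact: mulr_gt0 (p_gt0 _) (rbar_gt0 _ _).
by apply: sumr_ge0 => j _; exact: ltW (mulr_gt0 (p_gt0 _) (rbar_gt0 _ _)).
Qed.

Lemma wmatE m n : wmat u x p m n =
  \sum_(i : I) (p m * rbar u x i m) * (p n * rbar u x i n) / rbar0 u x p i.
Proof.
apply: eq_bigr => i _; rewrite /mbar.
(* [field] would unfold [rbar] and diverge, so the atoms are generalized first. *)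
move: (p m * _) (p n * _) (lt0r_neq0 (rbar0_gt0 i)) => am an.
by move: (rbar0 u x p i) => r0 r0_neq0; field.
Qed.

Lemma Sform_pairwise q : let v j := q j / p j in
  Sform u x p q =
    2^-1 * \sum_(m < N) \sum_(n < N) wmat u x p m n * (v m - v n) ^+ 2.
Proof.
move=> v; rewrite /Sform.
under eq_bigr => i _.
  rewrite /Lambda sum_sqr_dev_rescale; last first.
  - exact/lt0r_neq0/rbar0_gt0.
  - by move=> j; exact/lt0r_neq0.
  rewrite weighted_variance_pairwise; last exact/lt0r_neq0/rbar0_gt0.
  over.
rewrite -mulr_sumr exchange_big; congr (_ * _); apply: eq_bigr => m _.
rewrite exchange_big; apply: eq_bigr => n _.
by rewrite wmatE mulr_suml.
Qed.

End Equilibrium.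

Theorem lemma6 (R : realType) (I : finType) (N : nat) (beta : R)
  (u : I -> 'I_N.+1 -> R -> R) (e : I -> 'I_N.+1 -> R)
  (p : 'I_N -> R) (x : I -> 'I_N.+1 -> R) :
  (0 < N)%N -> 0 < beta < 1 ->
  (forall i k, 0 <= e i k) ->
  (forall i k (t : R), 0 < t ->
     derivable (u i k) t 1 /\ derivable (derive1 (u i k)) t 1 /\
     0 < derive1 (u i k) t /\ derive1 (derive1 (u i k)) t < 0) ->
  equilibrium beta u e p x ->
  (forall j, 0 < p j) ->
  (forall i k, 0 < x i k) ->
  forall q : 'I_N -> R,
    let v := fun j => q j / p j in
    Sform u x p q =
      2^-1 * \sum_(m < N) \sum_(n < N) wmat u x p m n * (v m - v n) ^+ 2 /\
    (forall m n : 'I_N, wmat u x p m n =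
       \sum_(i : I) (p m * rbar u x i m) * (p n * rbar u x i n) / rbar0 u x p i).
Proof.
move=> N_gt0 _ _ u_reg _ p_gt0 x_gt0 q v.
have du_gt0_d2u_lt0 i k t (t_gt0 : 0 < t) :
    0 < derive1 (u i k) t /\ derive1 (derive1 (u i k)) t < 0.
  by have [_ [_ ?]] := u_reg i k t t_gt0.
split; first exact: Sform_pairwise.
exact: wmatE.
Qed.
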